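(* Let $Q=q-E$ where $E\in\mathbb R$ and $q$ is a real random variable, symmetric about $0$, with $\mathbb E[\log(1+q^2)]<\infty$, $\mathbb E[q^2]>0$, and such that the distribution of $q^2$ is not supported on a single point. Let $\zeta\in\mathbb C^+$ satisfy $|\zeta|>1$, $\operatorname{Re}(\zeta+1/\zeta+E)=0$ and $\mathbb E[\log|\alpha(\zeta,q-E)|^2]=0$. Then $$\inf_{w\in\mathbb R}\ \mathbb E\Big[\log\frac{|\zeta|^2\,|w+1/\zeta-Q|^2}{|w-\zeta|^2}\Big]>0.$$
   Context: For $a\in\mathbb R$, $b>0$ and real $Q$, $\alpha(a+bi,Q)=\frac1b\big(a+\frac{a}{a^2+b^2}-Q\big)+\frac{i}{a^2+b^2}$. *)

From HB Require Import structures.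
From mathcomp Require Import all_boot all_order all_algebra.
From mathcomp Require Import all_classical all_reals all_analysis.
From mathcomp Require Import complex.
Set Implicit Arguments. Unset Strict Implicit. Unset Printing Implicit Defensive.
Import Order.TTheory GRing.Theory Num.Theory.
Local Open Scope ring_scope.

Definition alpha (R : rcfType) (z : R[i]) (Q : R) : R[i] :=
  Complex ((complex.Re z + complex.Re z / (complex.Re z ^+ 2 + complex.Im z ^+ 2) - Q) / complex.Im z)
          (1 / (complex.Re z ^+ 2 + complex.Im z ^+ 2)).

Notation cmod := ComplexField.Normc.normc.

From HB Require Import structures.
From mathcomp Require Import all_boot all_order all_algebra.
From mathcomp Require Import all_classical all_reals all_analysis.
From mathcomp Require Import complex measurable_realfun.
From mathcomp Require Import ring lra.
Set Implicit Arguments. Unset Strict Implicit. Unset Printing Implicit Defensive.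
Import Order.TTheory GRing.Theory Num.Theory.
Local Open Scope classical_set_scope.
Local Open Scope ring_scope.

(* Write zeta = a + i b and c = b / |zeta|^2 < b.  Given Re (zeta + 1/zeta + E) = 0,
   the hypothesis on alpha reads E ln (q^2 + c^2) = 2 ln b, and the integrand at w is
   k_u (q) = ln (b/c) + ln ((u - q)^2 + c^2) - ln (u^2 + b^2) with u = w - a.
   As q is symmetric, E k_u (q) = E [k_u (q) + k_u (- q)] / 2, and k_u (v) + k_u (- v)
   is 2 S_u (v) plus a multiple of ln (v^2 + c^2) - 2 ln b, which integrates to 0.
   S_u (v) is a nonnegative logarithm plus a Jensen gap of ln, hence nonnegative, and it
   is bounded below uniformly in u while v^2 + c^2 stays in a band [b^2 + eta, M]; such a
   band has positive probability because q^2 is not almost surely constant. *)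

Section RealInequalities.
Variable R : realType.
Implicit Types a p q s t x y : R.

Lemma sqr_add_sqr_gt0 x y : 0 < y -> 0 < x ^+ 2 + y ^+ 2.
Proof. by move=> y0; rewrite ltr_wpDl ?sqr_ge0 ?exprn_gt0. Qed.

Lemma ler_pdiv_mono (N N' D D' : R) : 0 <= N' -> N' <= N -> 0 < D -> D <= D' ->
  N' / D' <= N / D.
Proof.
move=> N'0 N'N D0 DD'; have D'0 := lt_le_trans D0 DD'.
apply: ler_pM => //; first by rewrite invr_ge0 ltW.
by rewrite lef_pV2 ?posrE.
Qed.

Lemma sqrBsqr_le s t : (s ^+ 2 - t ^+ 2) ^+ 2 <= 2 * (s ^+ 2 + t ^+ 2) * (s - t) ^+ 2.
Proof.
have -> : (s ^+ 2 - t ^+ 2) ^+ 2 = (s + t) ^+ 2 * (s - t) ^+ 2 by ring.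
by rewrite ler_wpM2r ?sqr_ge0 //; have := sqr_ge0 (s - t); nra.
Qed.

Lemma ln_le_subr1 x : 0 < x -> ln x <= x - 1.
Proof. by move=> x0; have := @le_ln1Dx R (x - 1); rewrite subrKC; apply; lra. Qed.

Lemma ln_le_sqrt x : 0 < x -> ln x <= 2 * (Num.sqrt x - 1).
Proof.
move=> x0; have s0 : 0 < Num.sqrt x by rewrite sqrtr_gt0.
rewrite -[X in ln X]sqr_sqrtr ?lnXn // ?mulr2n; last exact: ltW.
by have := ln_le_subr1 s0; lra.
Qed.

(* Apply [ln_le_sqrt] at p/m and q/m, m the weighted mean: with S the weighted
   mean of the two square roots the gap is at least 2 (1 - S) >= 1 - S^2, and
   1 - S^2 = a (1 - a) (sqrt (p/m) - sqrt (q/m))^2. *)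
Lemma ln_concave_gap a p q : 0 <= a <= 1 -> 0 < p -> 0 < q ->
  a * (1 - a) * (p - q) ^+ 2 / (2 * (p + q) * (a * p + (1 - a) * q))
  <= ln (a * p + (1 - a) * q) - a * ln p - (1 - a) * ln q.
Proof.
move=> /andP[a0 a1] p0 q0.
set m := a * p + (1 - a) * q.
have m0 : 0 < m by rewrite /m; nra.
have hp := ln_le_sqrt (divr_gt0 p0 m0); have hq := ln_le_sqrt (divr_gt0 q0 m0).
rewrite !ln_div ?posrE // in hp hq.
set sp := Num.sqrt (p / m) in hp *; set sq := Num.sqrt (q / m) in hq *.
have sp2 : sp ^+ 2 = p / m by rewrite sqr_sqrtr // divr_ge0 // ltW.
have sq2 : sq ^+ 2 = q / m by rewrite sqr_sqrtr // divr_ge0 // ltW.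
have mean1 : a * sp ^+ 2 + (1 - a) * sq ^+ 2 = 1.
  by rewrite sp2 sq2 !mulrA -mulrDl divff // gt_eqF.
set S := a * sp + (1 - a) * sq.
have gap_ge : 2 - 2 * S <= ln m - a * ln p - (1 - a) * ln q by rewrite /S; nra.
have S2E : 1 - S ^+ 2 = a * (1 - a) * (sp - sq) ^+ 2.
  rewrite -[in LHS]mean1 /S; ring.
have frac_le : (p - q) ^+ 2 / (2 * (p + q) * m) <= (sp - sq) ^+ 2.
  rewrite ler_pdivrMr; last by nra.
  have -> : p = m * sp ^+ 2 by rewrite sp2 mulrC divfK // gt_eqF.
  have -> : q = m * sq ^+ 2 by rewrite sq2 mulrC divfK // gt_eqF.
  have -> : (m * sp ^+ 2 - m * sq ^+ 2) ^+ 2 = m ^+ 2 * (sp ^+ 2 - sq ^+ 2) ^+ 2 by ring.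
  have -> : (sp - sq) ^+ 2 * (2 * (m * sp ^+ 2 + m * sq ^+ 2) * m) =
    m ^+ 2 * (2 * (sp ^+ 2 + sq ^+ 2) * (sp - sq) ^+ 2) by ring.
  by rewrite ler_wpM2l ?sqr_ge0 ?sqrBsqr_le.
have a_1a : 0 <= a * (1 - a) by nra.
have := ler_wpM2l a_1a frac_le; rewrite !mulrA => le_sq.
have := sqr_ge0 (1 - S); nra.
Qed.

Lemma ln_shift_sqr_growth (k w v c : R) : 0 < c ->
  `|k + ln ((w - v) ^+ 2 + c ^+ 2)| <=
   (`|k| + `|ln (c ^+ 2)| + ln (2 * w ^+ 2 + c ^+ 2 + 2)) + ln (1 + v ^+ 2).
Proof.
move=> c0; have c2 := exprn_gt0 2 c0.
have w2 := sqr_ge0 w; have v2 := sqr_ge0 v; have wv2 := sqr_ge0 (w - v).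
have l1 : 0 <= ln (1 + v ^+ 2) by rewrite ln_ge0 // lerDl.
have l2 : 0 <= ln (2 * w ^+ 2 + c ^+ 2 + 2) by rewrite ln_ge0 //; lra.
have lo : ln (c ^+ 2) <= ln ((w - v) ^+ 2 + c ^+ 2) by rewrite ler_ln ?posrE ?lerDr //; lra.
have up : ln ((w - v) ^+ 2 + c ^+ 2) <= ln (2 * w ^+ 2 + c ^+ 2 + 2) + ln (1 + v ^+ 2).
  rewrite -lnM ?posrE; [|lra|lra].
  rewrite ler_ln ?posrE; [|lra|nra].
  by have := sqr_ge0 (w + v); nra.
have := ler_norm k; have := ler_norm (- k); have := ler_norm (ln (c ^+ 2)).
have := ler_norm (- ln (c ^+ 2)); rewrite !normrN => hcN hc hkN hk.
by rewrite ler_norml; apply/andP; split; lra.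
Qed.

End RealInequalities.

Section LogKernel.
Variables (R : realType) (b c : R).
Hypotheses (c_gt0 : 0 < c) (b_gt0 : 0 < b).
Implicit Types u v eta M : R.

(* For [zeta = a + i b], [c = b / |zeta|^2] and [Re (zeta + 1/zeta + E) = 0],
   [log_alpha v] is [ln |alpha (zeta, v - E)|^2] and [log_kernel (w - a) v] is the
   integrand of the theorem at [w] (see [ln_cmod_alpha], [ln_resolvent_ratio]). *)
Definition weight u := b ^+ 2 / (u ^+ 2 + b ^+ 2).

Definition log_alpha v := ln (v ^+ 2 + c ^+ 2) - 2 * ln b.

Definition log_kernel u v :=
  ln b - ln c - ln (u ^+ 2 + b ^+ 2) + ln ((u - v) ^+ 2 + c ^+ 2).

Definition sym_excess u v :=
  (log_kernel u v + log_kernel u (- v)) / 2 - (weight u - 2^-1) * log_alpha v.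

Definition cross_term u v :=
  ln (1 + v ^+ 2 * (v ^+ 2 + c ^+ 2 - u ^+ 2) ^+ 2 /
          (c ^+ 2 * (v ^+ 2 + c ^+ 2 + u ^+ 2) ^+ 2)).

Definition jensen_gap u v :=
  ln (weight u * (v ^+ 2 + c ^+ 2) + (1 - weight u) * b ^+ 2)
  - weight u * ln (v ^+ 2 + c ^+ 2) - (1 - weight u) * ln (b ^+ 2).

Lemma weight_ge0 u : 0 <= weight u.
Proof. by rewrite divr_ge0 ?addr_ge0 ?sqr_ge0. Qed.

Lemma weight_le1 u : weight u <= 1.
Proof. by rewrite ler_pdivrMr ?sqr_add_sqr_gt0 // mul1r lerDr sqr_ge0. Qed.

Lemma log_alphaE v : log_alpha v = ln ((v ^+ 2 + c ^+ 2) / b ^+ 2).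
Proof. by rewrite /log_alpha ln_div ?posrE ?sqr_add_sqr_gt0 ?exprn_gt0 // lnXn // mulr_natl. Qed.

Lemma log_kernelE u v :
  log_kernel u v = ln (b / c * ((u - v) ^+ 2 + c ^+ 2) / (u ^+ 2 + b ^+ 2)).
Proof.
have Y_gt0 := sqr_add_sqr_gt0 (u - v) c_gt0; have U_gt0 := sqr_add_sqr_gt0 u b_gt0.
have cV_gt0 : 0 < c^-1 by rewrite invr_gt0.
rewrite ln_div ?lnM ?lnV ?posrE ?mulr_gt0 ?divr_gt0 //.
by rewrite /log_kernel; ring.
Qed.

Lemma log_kernelD_kernelN u v :
  log_kernel u v + log_kernel u (- v) = 2 * sym_excess u v + (2 * weight u - 1) * log_alpha v.
Proof. by rewrite /sym_excess; field. Qed.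

(* The cross term comes from the identity
   [(v^2+c^2) ((u-v)^2+c^2) ((u+v)^2+c^2) = c^2 (v^2+c^2+u^2)^2 + v^2 (v^2+c^2-u^2)^2]. *)
Lemma sym_excessE u v : sym_excess u v = cross_term u v / 2 + jensen_gap u v.
Proof.
have x0 := sqr_add_sqr_gt0 v c_gt0; have U0 := sqr_add_sqr_gt0 u b_gt0.
have xU0 : 0 < v ^+ 2 + c ^+ 2 + u ^+ 2 by rewrite ltr_wpDr ?sqr_ge0.
have y0 := sqr_add_sqr_gt0 (u - v) c_gt0; have y0' := sqr_add_sqr_gt0 (u + v) c_gt0.
have c2 := exprn_gt0 2 c_gt0; have b2 := exprn_gt0 2 b_gt0.
rewrite /sym_excess /log_kernel /log_alpha /jensen_gap /cross_term opprK.
have -> : 1 + v ^+ 2 * (v ^+ 2 + c ^+ 2 - u ^+ 2) ^+ 2 /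
    (c ^+ 2 * (v ^+ 2 + c ^+ 2 + u ^+ 2) ^+ 2) =
  (v ^+ 2 + c ^+ 2) * ((u - v) ^+ 2 + c ^+ 2) * ((u + v) ^+ 2 + c ^+ 2) /
    (c ^+ 2 * (v ^+ 2 + c ^+ 2 + u ^+ 2) ^+ 2).
  by field; rewrite !gt_eqF.
have -> : weight u * (v ^+ 2 + c ^+ 2) + (1 - weight u) * b ^+ 2 =
    b ^+ 2 * (v ^+ 2 + c ^+ 2 + u ^+ 2) / (u ^+ 2 + b ^+ 2).
  by rewrite /weight; field; rewrite gt_eqF.
rewrite !ln_div ?posrE ?mulr_gt0 ?exprn_gt0 // !lnM ?posrE ?mulr_gt0 ?exprn_gt0 //.
by field.
Qed.

Lemma cross_term_ge k u v : 0 <= k ->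
  k * (c ^+ 2 * (v ^+ 2 + c ^+ 2 + u ^+ 2) ^+ 2) <= v ^+ 2 * (v ^+ 2 + c ^+ 2 - u ^+ 2) ^+ 2 ->
  ln (1 + k) <= cross_term u v.
Proof.
move=> k0 hk.
have D0 : 0 < c ^+ 2 * (v ^+ 2 + c ^+ 2 + u ^+ 2) ^+ 2.
  by rewrite mulr_gt0 ?exprn_gt0 // ltr_wpDr ?sqr_ge0 ?sqr_add_sqr_gt0.
have N0 : 0 <= v ^+ 2 * (v ^+ 2 + c ^+ 2 - u ^+ 2) ^+ 2 /
    (c ^+ 2 * (v ^+ 2 + c ^+ 2 + u ^+ 2) ^+ 2).
  by apply: divr_ge0; [rewrite mulr_ge0 ?sqr_ge0 | exact: ltW].
rewrite ler_ln ?posrE ?lerD2l ?ler_pdivlMr //; lra.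
Qed.

Lemma cross_term_ge0 u v : 0 <= cross_term u v.
Proof.
by rewrite -ln1 -[X in ln X]addr0; apply: cross_term_ge => //; rewrite mul0r mulr_ge0 ?sqr_ge0.
Qed.

Lemma jensen_gap_ge u v :
  weight u * (1 - weight u) * (v ^+ 2 + c ^+ 2 - b ^+ 2) ^+ 2 /
    (2 * (v ^+ 2 + c ^+ 2 + b ^+ 2) *
     (weight u * (v ^+ 2 + c ^+ 2) + (1 - weight u) * b ^+ 2))
  <= jensen_gap u v.
Proof.
by apply: ln_concave_gap; rewrite ?weight_ge0 ?weight_le1 ?sqr_add_sqr_gt0 ?exprn_gt0.
Qed.

Lemma jensen_gap_ge0 u v : 0 <= jensen_gap u v.
Proof.
apply: le_trans (jensen_gap_ge u v).
have w0 := weight_ge0 u; have w1 := weight_le1 u.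
have x0 := sqr_add_sqr_gt0 v c_gt0; have b2 := exprn_gt0 2 b_gt0.
apply: divr_ge0; first by rewrite mulr_ge0 ?sqr_ge0 // mulr_ge0 // subr_ge0.
by apply: mulr_ge0; nra.
Qed.

Lemma sym_excess_ge0 u v : 0 <= sym_excess u v.
Proof.
by rewrite sym_excessE addr_ge0 ?divr_ge0 ?cross_term_ge0 ?jensen_gap_ge0.
Qed.

(* The first bound comes from the cross term when [u^2] lies outside
   [[(b^2 + eta)/2, 2 M]], the second from the Jensen gap when it lies inside. *)
Definition excess_lb eta M :=
  Num.min (ln (1 + (b ^+ 2 + eta - c ^+ 2) / (9 * c ^+ 2)) / 2)
    (b ^+ 2 * ((b ^+ 2 + eta) / 2) / (2 * M + b ^+ 2) ^+ 2 * eta ^+ 2 /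
      (2 * (M + b ^+ 2) * M)).

Lemma excess_lb_gt0 eta M : c < b -> 0 < eta -> b ^+ 2 + eta <= M -> 0 < excess_lb eta M.
Proof.
move=> cb eta0 bM.
have c2 := exprn_gt0 2 c_gt0; have b2 := exprn_gt0 2 b_gt0.
have cb2 : c ^+ 2 < b ^+ 2 by rewrite ltr_pXn2r // ?nnegrE ltW.
rewrite lt_min; apply/andP; split.
  by rewrite divr_gt0 // ln_gt0 // ltrDl divr_gt0 //; [lra | nra].
by rewrite divr_gt0 ?mulr_gt0 ?exprn_gt0 ?divr_gt0 ?invr_gt0 ?exprn_gt0 //; lra.
Qed.

Lemma cross_term_ge_far u v eta : c < b -> 0 < eta -> b ^+ 2 + eta <= v ^+ 2 + c ^+ 2 ->
  (v ^+ 2 + c ^+ 2 + u ^+ 2) ^+ 2 <= 9 * (v ^+ 2 + c ^+ 2 - u ^+ 2) ^+ 2 ->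
  ln (1 + (b ^+ 2 + eta - c ^+ 2) / (9 * c ^+ 2)) <= cross_term u v.
Proof.
move=> cb eta0 xl far.
have c2 := exprn_gt0 2 c_gt0.
have cb2 : c ^+ 2 < b ^+ 2 by rewrite ltr_pXn2r // ?nnegrE ltW.
apply: cross_term_ge; first by rewrite divr_ge0 //; nra.
have -> : (b ^+ 2 + eta - c ^+ 2) / (9 * c ^+ 2) * (c ^+ 2 * (v ^+ 2 + c ^+ 2 + u ^+ 2) ^+ 2)
    = (b ^+ 2 + eta - c ^+ 2) * ((v ^+ 2 + c ^+ 2 + u ^+ 2) ^+ 2 / 9).
  by field; rewrite gt_eqF.
apply: ler_pM; [lra | by rewrite divr_ge0 ?sqr_ge0 | lra |].
by rewrite ler_pdivrMr // mulrC.
Qed.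

Lemma jensen_gap_ge_mid u v eta M : 0 < eta ->
  (b ^+ 2 + eta) / 2 <= u ^+ 2 <= 2 * M -> b ^+ 2 + eta <= v ^+ 2 + c ^+ 2 <= M ->
  b ^+ 2 * ((b ^+ 2 + eta) / 2) / (2 * M + b ^+ 2) ^+ 2 * eta ^+ 2 /
    (2 * (M + b ^+ 2) * M) <= jensen_gap u v.
Proof.
move=> eta0 /andP[Ul Uh] /andP[xl xh].
apply: le_trans (jensen_gap_ge u v).
have b2 := exprn_gt0 2 b_gt0.
have w0 := weight_ge0 u; have w1 := weight_le1 u.
have wwE : weight u * (1 - weight u) = b ^+ 2 * u ^+ 2 / (u ^+ 2 + b ^+ 2) ^+ 2.
  by rewrite /weight; field; rewrite gt_eqF // sqr_add_sqr_gt0.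
set U := u ^+ 2 in Ul Uh wwE *; set x := v ^+ 2 + c ^+ 2 in xl xh *.
apply: ler_pdiv_mono.
- by rewrite mulr_ge0 ?sqr_ge0 // divr_ge0 ?sqr_ge0 // mulr_ge0; lra.
- rewrite wwE; apply: ler_pM.
  + by rewrite divr_ge0 ?sqr_ge0 // mulr_ge0; lra.
  + exact: sqr_ge0.
  + apply: ler_pdiv_mono; rewrite ?exprn_gt0 ?ler_wpM2l //; try lra.
    * by rewrite mulr_ge0 //; lra.
    * by rewrite ler_pXn2r // ?nnegrE; lra.
  + by rewrite ler_pXn2r // ?nnegrE; lra.
- by rewrite mulr_gt0 //; nra.
- by apply: ler_pM; nra.
Qed.

Lemma sym_excess_ge u v eta M : c < b -> 0 < eta -> b ^+ 2 + eta <= v ^+ 2 + c ^+ 2 <= M ->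
  excess_lb eta M <= sym_excess u v.
Proof.
move=> cb eta0 hx; have /andP[xl xh] := hx.
rewrite sym_excessE /excess_lb ge_min.
have g0 := cross_term_ge0 u v; have h0 := jensen_gap_ge0 u v.
have U0 := sqr_ge0 u.
have [mid|far] : (b ^+ 2 + eta) / 2 <= u ^+ 2 <= 2 * M \/
    (v ^+ 2 + c ^+ 2 + u ^+ 2) ^+ 2 <= 9 * (v ^+ 2 + c ^+ 2 - u ^+ 2) ^+ 2.
  case: (leP ((b ^+ 2 + eta) / 2) (u ^+ 2)) => Ul; last by right; nra.
  case: (leP (u ^+ 2) (2 * M)) => Uh; [by left; apply/andP | by right; nra].
- by apply/orP; right; have := jensen_gap_ge_mid eta0 mid hx; lra.
- by apply/orP; left; have := cross_term_ge_far cb eta0 xl far; lra.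
Qed.

End LogKernel.

Section MeasurableLogs.
Variable R : realType.

Lemma measurable_ln_sqr_shift (u c : R) :
  measurable_fun setT (fun v : R => ln ((u - v) ^+ 2 + c ^+ 2)).
Proof.
apply: measurableT_comp; first exact: measurable_ln.
apply: measurable_funD => //; apply: measurable_funX.
exact: measurable_funB.
Qed.

Lemma measurable_log_kernel (b c u : R) : measurable_fun setT (log_kernel b c u).
Proof. exact: measurable_funD (measurable_ln_sqr_shift u c). Qed.

Lemma measurable_log_alpha (b c : R) : measurable_fun setT (log_alpha b c).
Proof.
apply: measurable_funB => //; apply: measurableT_comp; first exact: measurable_ln.
by apply: measurable_funD => //; apply: measurable_funX.
Qed.

End MeasurableLogs.

Section MeasureFacts.
Context (R : realType) (d : measure_display) (T : measurableType d).

Lemma measurable_bool_set (f : T -> bool) :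
  measurable_fun setT f -> measurable [set x | f x].
Proof. by move=> mf; have := mf measurableT [set true] I; rewrite setTI. Qed.

Lemma measurable_eq_set (f : T -> R) (s : R) : measurable_fun setT f ->
  measurable [set x | f x = s].
Proof. by move=> mf; have := mf measurableT _ (measurable_set1 s); rewrite setTI. Qed.

Lemma bigcup_measure_gt0 (mu : {measure set T -> \bar R}) (F : nat -> set T) (A : set T) :
  (forall n, measurable (F n)) -> measurable A -> A `<=` \bigcup_n F n ->
  (0 < mu A)%E -> exists n, (0 < mu (F n))%E.
Proof.
move=> mF mA AF A0; apply: contrapT => noF.
have F0 n : mu (F n) = 0.
  apply/eqP; rewrite eq_le measure_ge0 andbT leNgt; apply/negP => Fn.
  by apply: noF; exists n.
have := measure_sigma_subadditive mu mF mA AF.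
by rewrite eseries0 ?leNgt ?A0 // => i _ _; exact: F0.
Qed.

Lemma prob_eq0_of_le0_integral0 (P : probability T R) (f : T -> R) (N : set T) :
  measurable N -> P N = 0 -> (forall x, ~ N x -> f x <= 0) ->
  measurable_fun setT f -> P.-integrable setT (EFin \o f) ->
  (\int[P]_x (f x)%:E = 0)%E -> P [set x | f x = 0] = 1%E.
Proof.
move=> mN N0 f_le0 mf intf f0.
have mfE : measurable_fun setT (EFin \o f) by apply/measurable_EFinP.
have absE : ae_eq P setT (fun x => `|(f x)%:E|%E) (fun x => (- f x)%:E).
  exists N; split => // x /=; apply: contra_notP => Nx _.
  by rewrite ler0_norm ?f_le0.
have : (\int[P]_x `|(f x)%:E| = 0)%E.
  rewrite (ae_eq_integral _ _ measurableT _ _ absE).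
  - under eq_integral do rewrite -mulN1r EFinM.
    by rewrite (integralZl measurableT intf) f0 mule0.
  - exact: measurableT_comp (@abse_measurable _ _) mfE.
  - by apply/measurable_EFinP; exact: measurable_funN.
move=> /(ae_eq_integral_abs P measurableT mfE).1 [N' [mN' N'0 f0N']].
apply/eqP; rewrite eq_le probability_le1 /=; last exact: measurable_eq_set.
have <- : P (~` N') = 1%E by rewrite probability_setC // N'0 sube0.
apply: (le_measure P); rewrite ?inE; [exact: measurableC | exact: measurable_eq_set |].
move=> x /= N'x; apply: contrapT => fx; apply: N'x; apply: f0N' => /=.
by move=> /(_ I) [].
Qed.

End MeasureFacts.

Section LogMomentRV.
Context (R : realType) (d : measure_display) (T : measurableType d)
  (P : probability T R) (q : {RV P >-> R}).
Hypothesis log_moment_fin : (\int[P]_x (ln (1 + q x ^+ 2))%:E < +oo)%E.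

Lemma integrable_ln1Dsqr : P.-integrable setT (fun x => (ln (1 + q x ^+ 2))%:E).
Proof.
have mh : measurable_fun setT (fun v : R => ln (1 + v ^+ 2)).
  apply: measurableT_comp; first exact: measurable_ln.
  by apply: measurable_funD => //; exact: measurable_funX.
apply/integrableP; split; first by apply/measurable_EFinP; apply: (measurableT_comp mh).
rewrite (eq_integral (fun x => (ln (1 + q x ^+ 2))%:E)) // => x _.
by rewrite gee0_abs // lee_fin ln_ge0 // lerDl sqr_ge0.
Qed.

Lemma integrable_log_growth (h : R -> R) (C : R) : measurable_fun setT h ->
  (forall v, `|h v| <= C + ln (1 + v ^+ 2)) ->
  P.-integrable setT (fun x => (h (q x))%:E).
Proof.
move=> mh h_le.
apply: (@le_integrable _ _ _ _ _ measurableT _ (fun x => (C%:E + (ln (1 + q x ^+ 2))%:E)%E)).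
- by apply/measurable_EFinP; exact: measurableT_comp.
- move=> x _ /=; rewrite lee_fin; apply: le_trans (h_le (q x)) _.
  by rewrite ger0_norm // (le_trans _ (h_le (q x))).
- apply: integrableD => //; last exact: integrable_ln1Dsqr.
  exact: finite_measure_integrable_cst.
Qed.

Lemma integrable_log_kernel (b c u : R) : 0 < c ->
  P.-integrable setT (fun x => (log_kernel b c u (q x))%:E).
Proof.
move=> c0; apply: integrable_log_growth (measurable_log_kernel b c u) _ => v.
exact: ln_shift_sqr_growth.
Qed.

Lemma integrable_log_kernelN (b c u : R) : 0 < c ->
  P.-integrable setT (fun x => (log_kernel b c u (- q x))%:E).
Proof.
move=> c0; set k := ln b - ln c - ln (u ^+ 2 + b ^+ 2).
apply: (@integrable_log_growth (fun v => log_kernel b c u (- v))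
  (`|k| + `|ln (c ^+ 2)| + ln (2 * u ^+ 2 + c ^+ 2 + 2))) => [|v].
  exact: measurableT_comp (measurable_log_kernel b c u) (measurable_funN _).
by have := ln_shift_sqr_growth k u (- v) c0; rewrite sqrrN.
Qed.

Lemma integrable_log_alpha (b c : R) : 0 < c ->
  P.-integrable setT (fun x => (log_alpha b c (q x))%:E).
Proof.
move=> c0; apply: (@integrable_log_growth _
  (`|2 * ln b| + `|ln (c ^+ 2)| + ln (2 * 0 ^+ 2 + c ^+ 2 + 2))) => [|v].
  exact: measurable_log_alpha.
by have := ln_shift_sqr_growth (- (2 * ln b)) 0 v c0; rewrite sub0r sqrrN addrC normrN.
Qed.

End LogMomentRV.

Section SymmetricLogKernel.
Context (R : realType) (d : measure_display) (T : measurableType d)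
  (P : probability T R) (q : {RV P >-> R}).
Hypothesis q_sym : forall A : set R, measurable A ->
  P (q @^-1` A) = P ((fun x => - q x) @^-1` A).

Lemma integral_sym (h : R -> R) : measurable_fun setT h ->
  P.-integrable setT (fun x => (h (q x))%:E) ->
  P.-integrable setT (fun x => (h (- q x))%:E) ->
  (\int[P]_x (h (q x))%:E = \int[P]_x (h (- q x))%:E)%E.
Proof.
move=> mh iq iNq; have mhE : measurable_fun setT (EFin \o h) by apply/measurable_EFinP.
have mNq : measurable_fun setT (fun x => - q x) by exact: measurable_funN.
rewrite -[LHS]/(\int[P]_x ((EFin \o h) \o q) x)%E.
rewrite -[RHS]/(\int[P]_x ((EFin \o h) \o (fun x => (- q x)%R)) x)%E.
have := @integral_pushforward _ _ _ _ _ q (measurable_funPT q) P setT _ mhE iq measurableT.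
have := @integral_pushforward _ _ _ _ _ _ mNq P setT _ mhE iNq measurableT.
rewrite !preimage_setT => <- <-.
by apply: eq_measure_integral => A mA _; exact: q_sym.
Qed.

Hypothesis log_moment_fin : (\int[P]_x (ln (1 + q x ^+ 2))%:E < +oo)%E.
Hypothesis q2_not_const : ~ (exists s : R, P [set x | q x ^+ 2 = s] = 1%E).
Variables b c : R.
Hypotheses (c_gt0 : 0 < c) (c_lt_b : c < b).
Hypothesis log_alpha_mean0 : (\int[P]_x (log_alpha b c (q x))%:E = 0)%E.

Let b_gt0 : 0 < b. Proof. exact: lt_trans c_lt_b. Qed.

Lemma measurable_sqrD_rv : measurable_fun setT (fun x => q x ^+ 2 + c ^+ 2).
Proof. by apply: measurable_funD => //; exact: measurable_funX. Qed.

Lemma measurable_level : measurable [set x | (b ^+ 2 < q x ^+ 2 + c ^+ 2)%R].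
Proof.
by apply/measurable_bool_set/measurable_fun_ltr => //; exact: measurable_sqrD_rv.
Qed.

Lemma prob_level_gt0 : (0 < P [set x | (b ^+ 2 < q x ^+ 2 + c ^+ 2)%R])%E.
Proof.
set N := [set x | _]; have mN : measurable N := measurable_level.
rewrite measure_gt0; apply/negP => /eqP N0; apply: q2_not_const.
have la_le0 x : ~ N x -> log_alpha b c (q x) <= 0.
  move=> /negP; rewrite -leNgt => le_b2.
  by rewrite /log_alpha subr_le0 mulr_natl -lnXn // ler_ln ?posrE ?exprn_gt0 ?sqr_add_sqr_gt0.
have mla : measurable_fun setT (fun x => log_alpha b c (q x)).
  exact: measurableT_comp (measurable_log_alpha b c) _.
have la0 := prob_eq0_of_le0_integral0 mN N0 la_le0 mla
  (integrable_log_alpha log_moment_fin b c_gt0) log_alpha_mean0.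
exists (b ^+ 2 - c ^+ 2); apply/eqP; rewrite eq_le probability_le1 /=; last first.
  by apply: measurable_eq_set; exact: measurable_funX.
rewrite -la0; apply: (le_measure P); rewrite ?inE.
- exact: measurable_eq_set.
- by apply: measurable_eq_set; exact: measurable_funX.
move=> x /= /eqP; rewrite /log_alpha subr_eq0 mulr_natl -lnXn // => /eqP eq_ln.
have x_pos : q x ^+ 2 + c ^+ 2 \is Num.pos by rewrite posrE sqr_add_sqr_gt0.
have b2_pos : b ^+ 2 \is Num.pos by rewrite posrE exprn_gt0.
by rewrite -(ln_inj x_pos b2_pos eq_ln) addrK.
Qed.

Lemma measurable_band (lo hi : R) :
  measurable [set x | (lo <= q x ^+ 2 + c ^+ 2 <= hi)%R].
Proof.
by apply/measurable_bool_set/measurable_and; apply: measurable_fun_ler => //;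
  exact: measurable_sqrD_rv.
Qed.

Lemma prob_band_gt0 : exists eta M, [/\ 0 < eta, b ^+ 2 + eta <= M &
  (0 < P [set x | (b ^+ 2 + eta <= q x ^+ 2 + c ^+ 2 <= M)%R])%E].
Proof.
pose F n := [set x | (b ^+ 2 + n.+1%:R^-1 <= q x ^+ 2 + c ^+ 2 <= b ^+ 2 + n.+1%:R)%R].
have cover : [set x | (b ^+ 2 < q x ^+ 2 + c ^+ 2)%R] `<=` \bigcup_n F n.
  move=> x /= lt_b2; set y := q x ^+ 2 + c ^+ 2 - b ^+ 2.
  have y0 : 0 < y by rewrite subr_gt0.
  have yV0 : 0 < y^-1 by rewrite invr_gt0.
  have yy0 : 0 <= y^-1 + y by rewrite addr_ge0 // ltW.
  have := archi_boundP yy0; set m := Num.bound _ => lt_m.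
  have lt_m1 : y^-1 + y < m.+1%:R by apply: (lt_le_trans lt_m); rewrite ler_nat.
  exists m => //=; apply/andP; split; last by rewrite /y in lt_m1; lra.
  by rewrite -lerBrDl -/y -[leRHS]invrK lef_pV2 ?posrE ?ltr0n //; lra.
have [n PFn] :=
  bigcup_measure_gt0 (fun n => measurable_band _ _) measurable_level cover prob_level_gt0.
exists n.+1%:R^-1, (b ^+ 2 + n.+1%:R); split => //.
by rewrite lerD2l (@le_trans _ _ 1) // ?invf_le1 ?ler1n ?ltr0n.
Qed.

Lemma log_kernel_integral_ge : exists2 dl : R, 0 < dl &
  forall u, (dl%:E <= \int[P]_x (log_kernel b c u (q x))%:E)%E.
Proof.
have [eta [M [eta0 etaM PS_gt0]]] := prob_band_gt0.
set S := [set x | _] in PS_gt0; have mS : measurable S := measurable_band _ _.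
have PSE : P S = (fine (P S))%:E by rewrite fineK ?fin_num_measure.
set pS := fine (P S) in PSE; have pS_gt0 : 0 < pS by rewrite -lte_fin -PSE.
set lb := excess_lb b c eta M; have lb_gt0 : 0 < lb by exact: excess_lb_gt0.
exists (lb * pS); first exact: mulr_gt0.
move=> u; set w := weight b u.
have ik := integrable_log_kernel log_moment_fin b u c_gt0.
have ikN := integrable_log_kernelN log_moment_fin b u c_gt0.
have ila := integrable_log_alpha log_moment_fin b c_gt0.
have ilow : P.-integrable setT
    (fun x => (2 * lb * \1_S x + (2 * w - 1) * log_alpha b c (q x))%:E).
  under eq_fun do rewrite EFinD !EFinM.
  by apply: integrableD => //; apply: integrableZl => //; exact: integrable_indic.
have ipair : P.-integrable setT
    (fun x => (log_kernel b c u (q x) + log_kernel b c u (- q x))%:E).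
  by under eq_fun do rewrite EFinD; exact: integrableD.
have lowE : (\int[P]_x (2 * lb * \1_S x + (2 * w - 1) * log_alpha b c (q x))%:E
    = (2 * lb * pS)%:E)%E.
  under eq_integral do rewrite EFinD !EFinM.
  rewrite integralD //; try by apply: integrableZl => //; exact: integrable_indic.
  rewrite !integralZl //; last exact: integrable_indic.
  rewrite log_alpha_mean0 integral_indic // setIT mule0 adde0.
  by rewrite /pS [in RHS]EFinM fineK ?fin_num_measure.
have kE := integral_sym (measurable_log_kernel b c u) ik ikN.
set I := (\int[P]_x (log_kernel b c u (q x))%:E)%E in kE *.
have pairE : (\int[P]_x (log_kernel b c u (q x) + log_kernel b c u (- q x))%:E = I + I)%E.
  by under eq_integral do rewrite EFinD; rewrite integralD // -kE.
have : ((2 * lb * pS)%:E <= I + I)%E.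
  rewrite -lowE -pairE; apply: le_integral => // x _.
  rewrite lee_fin log_kernelD_kernelN lerD2r -mulrA ler_pM2l // indicE.
  have [xS|_] := boolP (x \in S); last by rewrite mulr0 sym_excess_ge0.
  by rewrite mulr1 sym_excess_ge //; move: xS; rewrite inE.
have I_fin : I \is a fin_num by exact: integrable_fin_num.
by rewrite -(fineK I_fin) -EFinD !lee_fin; lra.
Qed.

End SymmetricLogKernel.

Section ResolventLogs.
Variable R : realType.
Variables a b En : R.
Hypothesis b_gt0 : 0 < b.
Hypothesis Re_eq0 : a + a / (a ^+ 2 + b ^+ 2) + En = 0.

Let r_gt0 : 0 < a ^+ 2 + b ^+ 2. Proof. exact: sqr_add_sqr_gt0. Qed.
Let EnE : En = - a - a / (a ^+ 2 + b ^+ 2).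
Proof. by move/eqP: Re_eq0; rewrite addrC addr_eq0 opprD => /eqP. Qed.

Lemma ln_cmod_alpha v :
  ln (cmod (alpha (a +i* b)%C (v - En)) ^+ 2) = log_alpha b (b / (a ^+ 2 + b ^+ 2)) v.
Proof.
rewrite log_alphaE ?divr_gt0 //= sqr_sqrtr ?addr_ge0 ?sqr_ge0 //.
by congr ln; rewrite EnE; field; rewrite !gt_eqF.
Qed.

Lemma ln_resolvent_ratio w v :
  ln (cmod (a +i* b)%C ^+ 2 * cmod ((w%:C)%C + (a +i* b)%C^-1 - ((v - En)%:C)%C) ^+ 2
      / cmod ((w%:C)%C - (a +i* b)%C) ^+ 2)
  = log_kernel b (b / (a ^+ 2 + b ^+ 2)) (w - a) v.
Proof.
rewrite log_kernelE ?divr_gt0 //= !sqr_sqrtr ?addr_ge0 ?sqr_ge0 //.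
by congr ln; rewrite EnE; field; rewrite !gt_eqF ?sqr_add_sqr_gt0.
Qed.

End ResolventLogs.

Theorem proposition5p3 (R : realType) (d : measure_display)
  (T : measurableType d) (P : probability T R) (q : {RV P >-> R})
  (En : R) (zeta : R[i]) :
  (forall A : set R, measurable A ->
     P (q @^-1` A) = P ((fun x => - q x) @^-1` A)) ->
  (\int[P]_x (ln (1 + q x ^+ 2))%:E < +oo)%E ->
  (0 < \int[P]_x (q x ^+ 2)%:E)%E ->
  ~ (exists c : R, P [set x | q x ^+ 2 = c] = 1%E) ->
  0 < complex.Im zeta -> 1 < cmod zeta ->
  complex.Re (zeta + zeta^-1 + (En%:C)%C) = 0 ->
  (\int[P]_x (ln (cmod (alpha zeta (q x - En)) ^+ 2))%:E = 0)%E ->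
  (0 < ereal_inf [set (\int[P]_x
        (ln (cmod zeta ^+ 2 * cmod ((w%:C)%C + zeta^-1 - ((q x - En)%:C)%C) ^+ 2
             / cmod ((w%:C)%C - zeta) ^+ 2))%:E)%E | w in [set: R]])%E.
Proof.
move=> q_sym log_fin _ q2_not_const; case: zeta => a b b_gt0 zeta_gt1 Re_eq0 alpha_mean0.
rewrite /= in b_gt0 zeta_gt1 Re_eq0.
set r := a ^+ 2 + b ^+ 2 in zeta_gt1 Re_eq0.
have r_gt1 : 1 < r.
  have := sqrtr_ge0 r; have := @sqr_sqrtr _ r (addr_ge0 (sqr_ge0 a) (sqr_ge0 b)); nra.
have c_gt0 : 0 < b / r by rewrite divr_gt0 // (lt_trans ltr01).
have c_lt_b : b / r < b by rewrite ltr_pdivrMr ?ltr_pMr // (lt_trans ltr01).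
have mean0 : (\int[P]_x (log_alpha b (b / r) (q x))%:E = 0)%E.
  by rewrite -alpha_mean0; apply: eq_integral => x _; rewrite ln_cmod_alpha.
have [dl dl_gt0 dl_le] := log_kernel_integral_ge q_sym log_fin q2_not_const c_gt0 c_lt_b mean0.
apply: (@lt_le_trans _ _ dl%:E); first by rewrite lte_fin.
apply: le_ereal_inf_tmp => _ [w _ <-].
rewrite (eq_integral (fun x => (log_kernel b (b / r) (w - a) (q x))%:E)) ?dl_le //.
by move=> x _; rewrite ln_resolvent_ratio.
Qed.
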